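(* Let $\nu$ and $\nu'$ be discrete distributions supported on a total of $\ell$ atoms in $[-1,1]$. If $|m_i(\nu)-m_i(\nu')|\le\delta$ for $i=1,\dots,\ell-1$, then \[W_1(\nu,\nu')\le O\big(\ell\delta^{\frac{1}{\ell-1}}\big).\]
   Context: $m_i(\pi)=\mathbb{E}_\pi X^i$; ''supported on a total of $\ell$ atoms'' means the union of the supports has $\ell$ points. $W_1$ is the 1-Wasserstein distance on $\mathbb{R}$; $O(\cdot)$ hides an absolute constant. *)

From HB Require Import structures.
From mathcomp Require Import all_boot all_order all_algebra.
From mathcomp Require Import boolp classical_sets reals exp.
Set Implicit Arguments. Unset Strict Implicit. Unset Printing Implicit Defensive.
Import Order.TTheory GRing.Theory Num.Theory.
Local Open Scope ring_scope.
Local Open Scope classical_set_scope.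

(* A discrete distribution on the atoms x : 'I_l -> R is a weight vector
   p : 'I_l -> R, nonnegative and summing to one. *)
Definition is_prob {R : realType} (l : nat) (p : 'I_l -> R) : Prop :=
  (forall j, 0 <= p j) /\ \sum_(j < l) p j = 1.

Definition moment {R : realType} (l : nat) (x p : 'I_l -> R) (i : nat) : R :=
  \sum_(j < l) p j * x j ^+ i.

Definition is_coupling {R : realType} (l : nat) (p q : 'I_l -> R)
  (pi : 'I_l -> 'I_l -> R) : Prop :=
  (forall j k, 0 <= pi j k) /\
  (forall j, \sum_(k < l) pi j k = p j) /\
  (forall k, \sum_(j < l) pi j k = q k).

Definition W1 {R : realType} (l : nat) (x p q : 'I_l -> R) : R :=
  inf [set c : R | exists pi, is_coupling p q pi /\
         c = \sum_(j < l) \sum_(k < l) pi j k * `|x j - x k| ].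

(* Sort the atoms and let D_m be the difference of the two distribution
   functions on the m-th gap [x_m, x_(m+1)].  The quantile coupling costs
   sum_m (x_(m+1) - x_m) |D_m|, which bounds W1.  Let P be an antiderivative of
   +-prod_j (X - x_j), the product running over the k <= l - 2 interior atoms
   where D changes sign, so that D_m P' >= 0 on every gap.  On the gap trimmed by
   r the derivative is at least r^k, hence
     (x_(m+1) - x_m) |D_m| <= D_m (P(x_(m+1)) - P(x_m)) / r^k + 2 r |D_m|.
   Summation by parts turns sum_m D_m (P(x_(m+1)) - P(x_m)) into
   - sum_j (p_j - q_j) P(x_j), which the moment bounds control by delta |P|_1
   <= delta 2^k, as deg P <= l - 1.  So W1 <= delta (2/r)^(l-2) + 2 r (l-1) for
   every r in (0, 1], and r = 2 delta^(1/(l-1)) gives the claim with C = 5. *)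

From HB Require Import structures.
From mathcomp Require Import all_boot all_order all_algebra.
From mathcomp Require Import boolp classical_sets reals exp.
From mathcomp Require Import polyrcf fingroup perm lra ring.
Import Order.TTheory GRing.Theory Num.Theory.
Local Open Scope ring_scope.
Set Implicit Arguments. Unset Strict Implicit. Unset Printing Implicit Defensive.

Ltac case_minmax :=
  repeat match goal with
  | |- context [Order.max ?a ?b] =>
      lazymatch a with context [Order.max _ _] => fail | context [Order.min _ _] => fail | _ =>
      lazymatch b with context [Order.max _ _] => fail | context [Order.min _ _] => fail | _ =>
      case: (leP a b) => ? end end
  | |- context [Order.min ?a ?b] =>
      lazymatch a with context [Order.max _ _] => fail | context [Order.min _ _] => fail | _ =>
      lazymatch b with context [Order.max _ _] => fail | context [Order.min _ _] => fail | _ =>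
      case: (leP a b) => ? end end
  end.

Section Overlap.
Variable R : realFieldType.
Implicit Types a b c d e : R.

Definition overlap a b c d := Num.max 0 (Num.min b d - Num.max a c).

Lemma overlap_ge0 a b c d : 0 <= overlap a b c d.
Proof. by rewrite /overlap le_max lexx. Qed.

Lemma overlapC a b c d : overlap a b c d = overlap c d a b.
Proof. by rewrite /overlap; case_minmax; lra. Qed.

Lemma overlap_nil a b c : overlap a b c c = 0.
Proof. by rewrite /overlap; case_minmax; lra. Qed.

Lemma overlap_cat a b c d e : c <= d -> d <= e ->
  overlap a b c d + overlap a b d e = overlap a b c e.
Proof. by rewrite /overlap => *; case_minmax; lra. Qed.

Lemma overlap_sub a b c d : c <= a -> a <= b -> b <= d -> overlap a b c d = b - a.
Proof. by rewrite /overlap => *; case_minmax; lra. Qed.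

Lemma overlap_unit a b : 0 <= a <= 1 -> 0 <= b <= 1 ->
  overlap a 1 0 b = Num.max 0 (b - a).
Proof. by rewrite /overlap => /andP[? ?] /andP[? ?]; case_minmax; lra. Qed.

Lemma overlap_telescope (F : nat -> R) a b s t :
  {homo F : i j / (i <= j)%N >-> i <= j} -> (s <= t)%N ->
  \sum_(s <= i < t) overlap a b (F i) (F i.+1) = overlap a b (F s) (F t).
Proof.
move=> F_homo st; have := telescope_sumr (fun i => overlap a b (F s) (F i)) st.
rewrite overlap_nil subr0 => <-; apply: eq_big_nat => i /andP[si _].
by rewrite -(overlap_cat a b (F_homo _ _ si) (F_homo _ _ (leqnSn i))) addrC addKr.
Qed.

End Overlap.

Definition cost {R : realType} {l : nat} (x : 'I_l -> R) (pi : 'I_l -> 'I_l -> R) : R :=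
  \sum_(j < l) \sum_(k < l) pi j k * `|x j - x k|.

Section MonotoneCoupling.
Variables (R : realType) (n : nat).
Implicit Types p q : 'I_n.+1 -> R.

Definition cdf p (k : nat) : R := \sum_(0 <= j < k) p (inord j).

Lemma cdf0 p : cdf p 0 = 0.
Proof. by rewrite /cdf big_geq. Qed.

Lemma cdfS p k : cdf p k.+1 = cdf p k + p (inord k).
Proof. by rewrite /cdf big_nat_recr. Qed.

Lemma cdf_full p : is_prob p -> cdf p n.+1 = 1.
Proof.
by case=> _ <-; rewrite /cdf big_mkord; apply: eq_bigr => j _; rewrite inord_val.
Qed.

Lemma cdf_homo p : is_prob p -> {homo cdf p : i j / (i <= j)%N >-> i <= j}.
Proof.
case=> p_ge0 _; apply: homo_leq => [//|? ? ?|k]; first exact: le_trans.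
by rewrite cdfS lerDl.
Qed.

Lemma cdf_ge0 p k : is_prob p -> 0 <= cdf p k.
Proof. by move=> pp; rewrite -(cdf0 p) cdf_homo. Qed.

Lemma cdf_le1 p k : is_prob p -> (k <= n.+1)%N -> cdf p k <= 1.
Proof. by move=> pp kn; rewrite -(cdf_full pp) cdf_homo. Qed.

Lemma cdf_dist_le1 p q k : is_prob p -> is_prob q -> (k <= n.+1)%N ->
  `|cdf p k - cdf q k| <= 1.
Proof.
move=> pp pq kn; have := cdf_ge0 k pp; have := cdf_ge0 k pq.
have := cdf_le1 pp kn; have := cdf_le1 pq kn.
by rewrite ler_norml => *; apply/andP; split; lra.
Qed.

Definition monotone_coupling p q (j k : 'I_n.+1) : R :=
  overlap (cdf p j) (cdf p j.+1) (cdf q k) (cdf q k.+1).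

Lemma monotone_coupling_row p q (j : 'I_n.+1) : is_prob p -> is_prob q ->
  \sum_(k < n.+1) monotone_coupling p q j k = p j.
Proof.
move=> pp pq; rewrite -(big_mkord xpredT (fun k => overlap _ _ (cdf q k) (cdf q k.+1))).
rewrite overlap_telescope ?cdf_homo //=; last exact: cdf_homo.
rewrite cdf0 cdf_full // overlap_sub ?cdf_ge0 ?cdf_le1 ?cdf_homo //.
by rewrite cdfS inord_val addrC addKr.
Qed.

Lemma monotone_coupling_is_coupling p q : is_prob p -> is_prob q ->
  is_coupling p q (monotone_coupling p q).
Proof.
move=> pp pq; split; first by move=> j k; exact: overlap_ge0.
split=> [j|k]; first exact: monotone_coupling_row.
under eq_bigr do rewrite /monotone_coupling overlapC.
exact: monotone_coupling_row.
Qed.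

Lemma monotone_coupling_crossing p q m : is_prob p -> is_prob q -> (m <= n)%N ->
  \sum_(j < n.+1 | (j <= m)%N) \sum_(k < n.+1 | (m < k)%N) monotone_coupling p q j k
  = Num.max 0 (cdf p m.+1 - cdf q m.+1).
Proof.
move=> pp pq mn.
have -> : \sum_(j < n.+1 | (j <= m)%N) \sum_(k < n.+1 | (m < k)%N) monotone_coupling p q j k
    = \sum_(0 <= j < m.+1) \sum_(m.+1 <= k < n.+1)
        overlap (cdf p j) (cdf p j.+1) (cdf q k) (cdf q k.+1).
  by rewrite (big_nat_widen _ _ n.+1) // big_mkord; apply: eq_bigr => j _; rewrite big_geq_mkord.
have q_homo := cdf_homo pq; have p_homo := cdf_homo pp.
under eq_bigr do rewrite overlap_telescope //= cdf_full // overlapC.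
by rewrite overlap_telescope //= cdf0 overlap_unit // !cdf_ge0 ?cdf_le1.
Qed.

End MonotoneCoupling.

Lemma addr_max0N (R : realFieldType) (d : R) : Num.max 0 d + Num.max 0 (- d) = `|d|.
Proof. by case: (lerP 0 d) => h; [rewrite ger0_norm | rewrite ltr0_norm]; case_minmax; lra. Qed.

Lemma exchange_crossing (V : nmodType) n (c1 c2 : 'I_n.+1 -> 'I_n -> bool)
    (F : 'I_n.+1 -> 'I_n.+1 -> 'I_n -> V) :
  \sum_(j < n.+1) \sum_(k < n.+1) \sum_(m < n | c1 j m && c2 k m) F j k m
  = \sum_(m < n) \sum_(j < n.+1 | c1 j m) \sum_(k < n.+1 | c2 k m) F j k m.
Proof.
under eq_bigr => j _ do under eq_bigr => k _ do rewrite big_mkcond.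
under eq_bigr => j _ do rewrite exchange_big.
rewrite exchange_big; apply: eq_bigr => m _.
rewrite [RHS]big_mkcond; apply: eq_bigr => j _.
by case: (c1 j m); [rewrite [RHS]big_mkcond | rewrite big1].
Qed.

Section SortedCost.
Variables (R : realType) (n : nat) (x : 'I_n.+1 -> R).
Hypothesis x_homo : {homo x : i j / (i <= j)%N >-> i <= j}.

Definition gap (m : nat) : R := x (inord m.+1) - x (inord m).

Lemma dist_sorted_leE (j k : 'I_n.+1) : (j <= k)%N ->
  `|x k - x j| = \sum_(m < n | (j <= m < k)%N) gap m.
Proof.
move=> jk; have kn : (k <= n)%N by rewrite -ltnS.
rewrite ger0_norm ?subr_ge0 ?x_homo //.
have := telescope_sumr (fun m => x (inord m)) jk; rewrite !inord_val => <-.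
rewrite (big_nat_widen _ _ _ _ _ kn) (big_nat_widenl _ 0) // big_mkord.
by apply: eq_bigl => m; rewrite andbC.
Qed.

Lemma dist_sortedE (j k : 'I_n.+1) : `|x j - x k| =
  \sum_(m < n | (j <= m < k)%N) gap m + \sum_(m < n | (k <= m < j)%N) gap m.
Proof.
wlog jk : j k / (j <= k)%N.
  move=> wlog; case: (leqP j k) => [/wlog //|/ltnW /wlog kj].
  by rewrite distrC kj addrC.
rewrite distrC dist_sorted_leE // [X in _ + X]big_pred0 ?addr0 // => m.
by apply/negbTE/negP => /andP[km mj]; move: (leq_trans jk km); rewrite leqNgt mj.
Qed.

Lemma cost_sortedE (pi : 'I_n.+1 -> 'I_n.+1 -> R) :
  cost x pi = \sum_(m < n) gap m *
    (\sum_(j < n.+1 | (j <= m)%N) \sum_(k < n.+1 | (m < k)%N) pi j k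
     + \sum_(k < n.+1 | (k <= m)%N) \sum_(j < n.+1 | (m < j)%N) pi j k).
Proof.
rewrite /cost.
under eq_bigr do under eq_bigr do rewrite dist_sortedE mulrDr !mulr_sumr.
under eq_bigr do rewrite big_split /=.
rewrite big_split /= [X in _ + X]exchange_big /=.
rewrite (exchange_crossing (fun j m => (j <= m)%N) (fun k m => (m < k)%N)).
rewrite (exchange_crossing (fun k m => (k <= m)%N) (fun j m => (m < j)%N)).
rewrite -big_split; apply: eq_bigr => m _ /=.
by rewrite mulrDr !mulr_sumr; congr (_ + _); apply: eq_bigr => ? _;
  rewrite mulr_sumr; apply: eq_bigr => ? _; rewrite mulrC.
Qed.

Lemma monotone_coupling_costE p q : is_prob p -> is_prob q ->
  cost x (monotone_coupling p q) = \sum_(m < n) gap m * `|cdf p m.+1 - cdf q m.+1|.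
Proof.
move=> pp pq; rewrite cost_sortedE; apply: eq_bigr => m _.
have mn : (m <= n)%N := ltnW (ltn_ord m).
under [X in _ + X]eq_bigr do under eq_bigr do rewrite /monotone_coupling overlapC.
by rewrite !monotone_coupling_crossing // -addr_max0N opprB.
Qed.

End SortedCost.

Section CoefNorm.
Variable R : numFieldType.
Implicit Types (P : {poly R}) (c : R).

Definition l1norm P : R := \sum_(i < size P) `|P`_i|.

Lemma l1norm_widen P N : (size P <= N)%N -> \sum_(i < N) `|P`_i| = l1norm P.
Proof.
move=> PN; rewrite /l1norm (big_ord_widen N (fun i => `|P`_i|) PN) [RHS]big_mkcond.
apply: eq_bigr => i _; case: ltnP => // /(nth_default 0) ->.
by rewrite normr0.
Qed.

Lemma l1norm_ge0 P : 0 <= l1norm P.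
Proof. exact: sumr_ge0. Qed.

Lemma l1normZ c P : l1norm (c *: P) = `|c| * l1norm P.
Proof.
rewrite -(l1norm_widen (size_scale_leq c P)) /l1norm mulr_sumr.
by apply: eq_bigr => i _; rewrite coefZ normrM.
Qed.

Lemma l1norm_mulXsubC c P : l1norm (('X - c%:P) * P) <= (1 + `|c|) * l1norm P.
Proof.
have size_le : (size (('X - c%:P) * P)%R <= (size P).+1)%N.
  by rewrite (leq_trans (size_polyMleq _ _)) // size_XsubC.
rewrite -(l1norm_widen size_le).
under eq_bigr do rewrite mulrBl coefB coefXM coefCM.
apply: le_trans (ler_sum _ (fun i _ => ler_normB _ _)) _.
rewrite big_split /= mulrDl mul1r; apply: lerD.
  by rewrite big_ord_recl /= normr0 add0r; apply: ler_sum => i _.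
rewrite -(l1norm_widen (leqnSn (size P))) mulr_sumr.
by apply: ler_sum => i _; rewrite normrM.
Qed.

Lemma l1norm_prod_XsubC (I : eqType) (s : seq I) (c : I -> R) :
  {in s, forall i, `|c i| <= 1} -> l1norm (\prod_(i <- s) ('X - (c i)%:P)) <= 2 ^+ size s.
Proof.
elim: s => [|i s IHs] c_le1.
  by rewrite big_nil /l1norm size_poly1 big_ord1 coef1 normr1.
rewrite big_cons exprS; apply: le_trans (l1norm_mulXsubC _ _) _.
apply: ler_pM; rewrite ?addr_ge0 ?l1norm_ge0 //.
  by rewrite -[2]/(1 + 1)%:R natrD lerD2l c_le1 ?mem_head.
by apply: IHs => j sj; rewrite c_le1 // in_cons sj orbT.
Qed.

Definition antider P : {poly R} :=
  \poly_(i < (size P).+1) (if i is i'.+1 then P`_i' / i'.+1%:R else 0).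

Lemma antiderK P : (antider P)^`() = P.
Proof.
apply/polyP => i; rewrite coef_deriv coef_poly ltnS.
case: ltnP => [_|/(nth_default 0) ->]; last by rewrite mul0rn.
by rewrite -[_ *+ i.+1]mulr_natr divfK // pnatr_eq0.
Qed.

Lemma size_antider P : (size (antider P) <= (size P).+1)%N.
Proof. exact: size_poly. Qed.

Lemma l1norm_antider P : l1norm (antider P) <= l1norm P.
Proof.
rewrite -(l1norm_widen (size_antider P)) big_ord_recl coef_poly /= normr0 add0r.
apply: ler_sum => i _; rewrite coef_poly ltnS ltn_ord normrM.
by rewrite ler_piMr // normfV invf_le1 ?normr_gt0 ?pnatr_eq0 // normr_nat ler1n.
Qed.

Lemma sum_mul_horner_le n (X mu : nat -> R) (delta : R) P :
  0 <= delta -> (size P <= n.+1)%N -> \sum_(0 <= j < n.+1) mu j = 0 ->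
  (forall i, (1 <= i <= n)%N -> `|\sum_(0 <= j < n.+1) mu j * X j ^+ i| <= delta) ->
  `|\sum_(0 <= j < n.+1) mu j * P.[X j]| <= delta * l1norm P.
Proof.
move=> delta_ge0 size_P mu_sum0 mu_moments.
under eq_bigr do rewrite horner_coef mulr_sumr.
rewrite exchange_big /= mulr_sumr; apply: le_trans (ler_norm_sum _ _ _) _.
apply: ler_sum => i _; under eq_bigr do rewrite mulrCA.
rewrite -mulr_sumr normrM mulrC ler_wpM2r //.
case: i => [[|i] /= lt_i_size].
  by under eq_bigr do rewrite expr0 mulr1; rewrite mu_sum0 normr0.
by apply: mu_moments; rewrite /= -ltnS (leq_trans lt_i_size).
Qed.

End CoefNorm.

Lemma prod_sign_changes (R : pzRingType) (s : nat -> bool) N m : (m <= N)%N ->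
  \prod_(j <- iota 1 N | s j.-1 != s j) (-1) ^+ (m < j)%N = (-1) ^+ (s m (+) s N) :> R.
Proof.
elim: N m => [|N IHN] m; first by rewrite leqn0 => /eqP->; rewrite big_nil addbb.
rewrite leq_eqVlt => /orP[/eqP->|]; last rewrite ltnS => mN.
  rewrite addbb big1_seq // => j /andP[_].
  by rewrite mem_iota add1n ltnS => /andP[_ jN]; rewrite ltnNge jN.
rewrite -[N.+1]addn1 iotaD big_cat /= IHN // big_cons big_nil add1n addn1 ltnS mN.
by case: (s m); case: (s N); case: (s N.+1); rewrite /= ?mulr1 ?expr0 ?expr1 ?mulrN1 ?opprK.
Qed.

Lemma summation_by_parts (R : comPzRingType) (mu f : nat -> R) N :
  \sum_(0 <= j < N.+1) mu j * f j =
  (\sum_(0 <= j < N.+1) mu j) * f N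
  - \sum_(0 <= m < N) (\sum_(0 <= j < m.+1) mu j) * (f m.+1 - f m).
Proof.
elim: N => [|N IHN]; first by rewrite !big_nat1 big_geq // subr0.
rewrite big_nat_recr //= IHN [in RHS](big_nat_recr N.+1) //=.
by rewrite (big_nat_recr N 0 (fun m => (\sum_(0 <= j < m.+1) mu j) * (f m.+1 - f m))) //=; ring.
Qed.

Section HornerIncrement.
Variable R : rcfType.
Implicit Types (H : {poly R}) (a b c r : R).

Lemma horner_increment_ge H a b c : a <= b ->
  (forall t, a < t < b -> c <= H^`().[t]) -> c * (b - a) <= H.[b] - H.[a].
Proof.
rewrite le_eqVlt => /predU1P[->|lt_ab] H'_ge; first by rewrite !subrr mulr0.
have [t] := poly_mvt H lt_ab; rewrite in_itv /= => t_in ->.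
by apply: ler_wpM2r; [rewrite subr_ge0 ltW | exact: H'_ge].
Qed.

Lemma horner_increment_ge_interior H a b c r : 0 <= c -> 0 <= r -> a <= b ->
  (forall t, a < t < b -> 0 <= H^`().[t]) ->
  (forall t, a + r < t < b - r -> c <= H^`().[t]) ->
  c * (b - a - 2 * r) <= H.[b] - H.[a].
Proof.
move=> c_ge0 r_ge0 ab H'_ge0 H'_ge.
have H_homo u v : a <= u -> u <= v -> v <= b -> H.[u] <= H.[v].
  move=> au uv vb; rewrite -subr_ge0 -[0](mul0r (v - u)) horner_increment_ge // => t /andP[ut tv].
  by rewrite H'_ge0 // (le_lt_trans au ut) (lt_le_trans tv vb).
case: (lerP (b - a) (2 * r)) => [small|large].
  apply: (@le_trans _ _ 0); last by rewrite subr_ge0 H_homo.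
  by rewrite mulr_ge0_le0 // subr_le0.
have mid : c * ((b - r) - (a + r)) <= H.[b - r] - H.[a + r].
  apply: horner_increment_ge; last exact: H'_ge.
  lra.
have near_a : H.[a] <= H.[a + r] by apply: H_homo; lra.
have near_b : H.[b - r] <= H.[b] by apply: H_homo; lra.
lra.
Qed.

End HornerIncrement.

Section SignChangePolynomial.
Variables (R : rcfType) (n : nat) (X mu : nat -> R) (delta : R).
Hypotheses (X_homo : forall i j, (i <= j <= n.+1)%N -> X i <= X j)
  (X_le1 : forall i, (i <= n.+1)%N -> `|X i| <= 1)
  (mu_sum0 : \sum_(0 <= j < n.+2) mu j = 0)
  (mu_moments : forall i, (1 <= i <= n.+1)%N ->
     `|\sum_(0 <= j < n.+2) mu j * X j ^+ i| <= delta).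

Let D m := \sum_(0 <= j < m.+1) mu j.
Let neg m := (D m < 0).
Let sign_changes := [seq j <- iota 1 n | neg j.-1 != neg j].
Let k := size sign_changes.
Let Q := \prod_(j <- sign_changes) ('X - (X j)%:P).
Let P := (-1) ^+ neg n *: antider Q.

Let sign_changes_le j : j \in sign_changes -> (j <= n)%N.
Proof. by rewrite mem_filter mem_iota add1n ltnS => /andP[_ /andP[]]. Qed.

Let k_le : (k <= n)%N.
Proof. by rewrite /k size_filter (leq_trans (count_size _ _)) ?size_iota. Qed.

Let size_P : (size P <= n.+2)%N.
Proof.
rewrite (leq_trans (size_scale_leq _ _)) // (leq_trans (size_antider _)) //.
by rewrite /Q size_prod_XsubC !ltnS.
Qed.

Let l1norm_P : l1norm P <= 2 ^+ k.
Proof.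
rewrite /P l1normZ normr_sign mul1r (le_trans (l1norm_antider _)) //.
apply: l1norm_prod_XsubC => j /sign_changes_le jn.
by rewrite X_le1 // leqW.
Qed.

Let sub_X_sign m j t : (m <= n)%N -> (j <= n.+1)%N -> X m < t < X m.+1 ->
  t - X j = (-1) ^+ (m < j)%N * `|t - X j|.
Proof.
move=> mn jn /andP[Xm_t t_Xm1]; case: ltnP => [mj|jm].
  have : X m.+1 <= X j by rewrite X_homo // mj.
  by move=> ?; rewrite ltr0_norm ?expr1 ?mulN1r ?opprK //; lra.
have : X j <= X m by rewrite X_homo // jm leqW.
by move=> ?; rewrite ger0_norm ?expr0 ?mul1r //; lra.
Qed.

Let deriv_P_sign m t : (m <= n)%N -> X m < t < X m.+1 ->
  (-1) ^+ neg m * P^`().[t] = \prod_(j <- sign_changes) `|t - X j|.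
Proof.
move=> mn t_in; rewrite /P derivZ antiderK hornerZ /Q horner_prod /sign_changes !big_filter.
have -> : \prod_(j <- iota 1 n | neg j.-1 != neg j) ('X - (X j)%:P).[t]
    = \prod_(j <- iota 1 n | neg j.-1 != neg j) ((-1) ^+ (m < j)%N * `|t - X j|) :> R.
  rewrite big_seq_cond [RHS]big_seq_cond; apply: eq_bigr => j /andP[+ _].
  by rewrite mem_iota add1n ltnS hornerXsubC => /andP[_ jn]; apply: sub_X_sign (leqW jn) t_in.
by rewrite big_split /= prod_sign_changes // mulrA -signr_addb signrMK.
Qed.

Let deriv_P_interior_ge m r t : (m <= n)%N -> 0 < r -> X m + r < t < X m.+1 - r ->
  r ^+ k <= (-1) ^+ neg m * P^`().[t].
Proof.
move=> mn r_gt0 /andP[lo hi]; rewrite deriv_P_sign //; last by apply/andP; split; lra.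
rewrite /k -count_predT -iter_mulr_1 -big_const_seq big_seq [leRHS]big_seq.
apply: ler_prod => j /sign_changes_le jn; rewrite (ltW r_gt0) /= ler_normr.
case: (leqP j m) => [jm|mj].
  have : X j <= X m by rewrite X_homo // jm leqW.
  by move=> ?; apply/orP; left; lra.
have : X m.+1 <= X j by rewrite X_homo // mj leqW.
by move=> ?; apply/orP; right; lra.
Qed.

Let gap_weighted_le m r : (m <= n)%N -> 0 < r ->
  `|D m| * (X m.+1 - X m) <= D m * (P.[X m.+1] - P.[X m]) / r ^+ k + 2 * r * `|D m|.
Proof.
move=> mn r_gt0; have rk_gt0 : 0 < r ^+ k := exprn_gt0 _ r_gt0.
pose H := (-1) ^+ neg m *: P.
have H_incr : r ^+ k * (X m.+1 - X m - 2 * r) <= H.[X m.+1] - H.[X m].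
  apply: horner_increment_ge_interior => [|||t t_in|t t_in].
  - by rewrite exprn_ge0 // ltW.
  - exact: ltW.
  - by rewrite X_homo // leqnSn ltnS.
  - by rewrite derivZ hornerZ deriv_P_sign //; apply: prodr_ge0.
  - by rewrite derivZ hornerZ deriv_P_interior_ge.
have -> : D m * (P.[X m.+1] - P.[X m]) = `|D m| * (H.[X m.+1] - H.[X m]).
  by rewrite {1}[D m]numEsign /H /neg !hornerZ; ring.
suff : `|D m| * (X m.+1 - X m - 2 * r) <= `|D m| * (H.[X m.+1] - H.[X m]) / r ^+ k by lra.
by rewrite ler_pdivlMr // -mulrA ler_wpM2l // mulrC.
Qed.

Let sum_D_horner : \sum_(0 <= m < n.+1) D m * (P.[X m.+1] - P.[X m])
  = - \sum_(0 <= j < n.+2) mu j * P.[X j].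
Proof. by rewrite (summation_by_parts mu (fun j => P.[X j])) mu_sum0 mul0r sub0r opprK. Qed.

Lemma gaps_weighted_le r : 0 < r <= 1 ->
  \sum_(0 <= m < n.+1) (X m.+1 - X m) * `|D m|
  <= delta * (2 / r) ^+ n + 2 * r * \sum_(0 <= m < n.+1) `|D m|.
Proof.
move=> /andP[r_gt0 r_le1]; have rk_gt0 : 0 < r ^+ k := exprn_gt0 _ r_gt0.
have delta_ge0 : 0 <= delta := le_trans (normr_ge0 _) (mu_moments (isT : (1 <= 1 <= n.+1)%N)).
apply: (@le_trans _ _ (\sum_(0 <= m < n.+1)
    (D m * (P.[X m.+1] - P.[X m]) / r ^+ k + 2 * r * `|D m|))).
  by apply: ler_sum_nat => m /andP[_ mn]; rewrite mulrC; apply: gap_weighted_le.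
rewrite big_split /= -mulr_suml -mulr_sumr sum_D_horner lerD2r ler_pdivrMr //.
rewrite (le_trans (ler_norm _)) // normrN.
rewrite (le_trans (sum_mul_horner_le _ size_P mu_sum0 mu_moments)) //.
rewrite -mulrA ler_wpM2l // (le_trans l1norm_P) //.
have -> : 2 ^+ k = (2 / r) ^+ k * r ^+ k :> R by rewrite -exprMn divfK ?gt_eqF.
have two_r_ge1 : 1 <= 2 / r by rewrite ler_pdivlMr // mul1r; lra.
by apply: ler_wpM2r; [exact: ltW | exact: ler_weXn2l].
Qed.

End SignChangePolynomial.

Section Wasserstein.
Variable R : realType.

Lemma W1_le_cost l (x p q : 'I_l -> R) pi : is_coupling p q pi -> W1 x p q <= cost x pi.
Proof.
move=> pi_coupling; apply: ge_inf; last by exists pi.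
exists 0 => _ [pi' [[pi'_ge0 _] ->]].
by apply: sumr_ge0 => j _; apply: sumr_ge0 => k _; rewrite mulr_ge0.
Qed.

Lemma is_prob_perm l (s : {perm 'I_l}) (p : 'I_l -> R) : is_prob p -> is_prob (p \o s).
Proof.
case=> p_ge0 p_sum; split=> [j|]; first exact: p_ge0.
by rewrite -p_sum [RHS](reindex_inj (@perm_inj _ s)).
Qed.

Lemma moment_perm l (s : {perm 'I_l}) (x p : 'I_l -> R) i :
  moment (x \o s) (p \o s) i = moment x p i.
Proof. by rewrite /moment [RHS](reindex_inj (@perm_inj _ s)). Qed.

Lemma W1_le_perm l (s : {perm 'I_l}) (x p q : 'I_l -> R) pi :
  is_coupling (p \o s) (q \o s) pi -> W1 x p q <= cost (x \o s) pi.
Proof.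
case=> pi_ge0 [pi_row pi_col].
pose pi' j k := pi (s^-1 j)%g (s^-1 k)%g.
have reindex (F : 'I_l -> R) : \sum_(j < l) F j = \sum_(j < l) F (s j).
  exact: reindex_inj (@perm_inj _ s).
have -> : cost (x \o s) pi = cost x pi'.
  rewrite /cost [RHS]reindex; apply: eq_bigr => j _; rewrite [RHS]reindex.
  by apply: eq_bigr => k _; rewrite /pi' !permK.
apply: W1_le_cost; split=> [j k|]; first exact: pi_ge0.
split=> [j|k]; rewrite reindex /pi' /=.
- by under eq_bigr do rewrite permK; rewrite pi_row /= permKV.
- by under eq_bigr do rewrite permK; rewrite pi_col /= permKV.
Qed.

Lemma sorting_perm n (x : 'I_n.+1 -> R) :
  exists s : {perm 'I_n.+1}, {homo x \o s : i j / (i <= j)%N >-> i <= j}.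
Proof.
pose leT i j := x i <= x j.
pose xs := sort leT (enum 'I_n.+1).
have size_xs : size xs = n.+1 by rewrite size_sort size_enum_ord.
have xs_sorted : sorted leT xs by apply: sort_sorted => i j; exact: le_total.
have nth_inj : injective (fun i : 'I_n.+1 => nth ord0 xs i).
  move=> i j /eqP; rewrite nth_uniq ?size_xs ?sort_uniq ?enum_uniq // => /eqP.
  exact: val_inj.
exists (perm nth_inj) => i j ij; rewrite /= !permE.
have leT_trans : transitive leT by move=> ? ? ?; exact: le_trans.
have leT_refl : reflexive leT by move=> ?; exact: lexx.
by apply: (sorted_leq_nth leT_trans leT_refl) => //; rewrite inE size_xs.
Qed.

End Wasserstein.

Section SortedAtoms.
Variables (R : realType) (n : nat) (x p q : 'I_n.+2 -> R).
Hypotheses (x_homo : {homo x : i j / (i <= j)%N >-> i <= j})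
  (x_bound : forall j, -1 <= x j <= 1) (p_prob : is_prob p) (q_prob : is_prob q).

Let x_homo_nat i j : (i <= j <= n.+1)%N -> x (inord i) <= x (inord j).
Proof. by case/andP=> ij jn; apply: x_homo; rewrite !inordK // (leq_ltn_trans ij). Qed.

Let cost_gaps : cost x (monotone_coupling p q)
  = \sum_(0 <= m < n.+1) gap x m * `|cdf p m.+1 - cdf q m.+1|.
Proof. by rewrite big_mkord monotone_coupling_costE. Qed.

Lemma monotone_coupling_cost_le2 : cost x (monotone_coupling p q) <= 2.
Proof.
rewrite cost_gaps (@le_trans _ _ (\sum_(0 <= m < n.+1) gap x m)) //.
  apply: ler_sum_nat => m /andP[_ mn].
  rewrite ler_piMr ?cdf_dist_le1 ?(leqW mn) //.
  by rewrite subr_ge0 x_homo_nat // leqnSn.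
rewrite /gap telescope_sumr //.
by have := x_bound (inord n.+1); have := x_bound (inord 0); lra.
Qed.

Lemma monotone_coupling_cost_le delta r :
  (forall i, (1 <= i <= n.+1)%N -> `|moment x p i - moment x q i| <= delta) ->
  0 < r <= 1 -> cost x (monotone_coupling p q) <= delta * (2 / r) ^+ n + 2 * r * n.+1%:R.
Proof.
move=> moments_le r_in; pose mu j := p (inord j) - q (inord j).
have D_cdf m : \sum_(0 <= j < m.+1) mu j = cdf p m.+1 - cdf q m.+1 by rewrite sumrB.
rewrite cost_gaps; under eq_bigr do rewrite -D_cdf.
apply: le_trans (gaps_weighted_le (X := fun m => x (inord m)) (delta := delta) _ _ _ _ r_in) _.
- exact: x_homo_nat.
- by move=> i _; rewrite ler_norml x_bound.
- by rewrite D_cdf !cdf_full ?subrr.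
- move=> i /moments_le /=.
  suff -> : \sum_(0 <= j < n.+2) mu j * x (inord j) ^+ i = moment x p i - moment x q i by [].
  rewrite /moment -sumrB big_mkord.
  by apply: eq_bigr => j _; rewrite /mu inord_val mulrBl.
rewrite lerD2l; apply: ler_wpM2l; first by case/andP: r_in => r_gt0 _; rewrite mulr_ge0 ?ltW.
have -> : n.+1%:R = \sum_(0 <= m < n.+1) (1 : R) by rewrite sumr_const_nat subn0.
by apply: ler_sum_nat => m /andP[_ mn]; rewrite D_cdf cdf_dist_le1 ?(leqW mn).
Qed.

End SortedAtoms.

Lemma le_root_of_radius_bound (R : realType) n (w delta : R) : 0 <= delta -> w <= 2 ->
  (forall r, 0 < r <= 1 -> w <= delta * (2 / r) ^+ n + 2 * r * n.+1%:R) ->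
  w <= 5 * n.+2%:R * powR delta n.+1%:R^-1.
Proof.
move=> delta_ge0 w_le2 w_le.
set a := powR delta _; set N : R := n.+1%:R in w_le *.
have a_ge0 : 0 <= a := powR_ge0 _ _.
have a_exp : a ^+ n.+1 = delta.
  by rewrite /a -powR_mulrn // -powRrM mulVf ?pnatr_eq0 // powRr1.
have N_ge1 : 1 <= N by rewrite ler1n.
have Na_ge0 : 0 <= N * a by rewrite mulr_ge0 // (le_trans ler01).
rewrite -[n.+2%:R]natr1 -/N.
case: (lerP 2^-1 a) => [a_large|a_small].
  have : 2 * 2^-1 <= (N + 1) * a by apply: ler_pM; rewrite ?invr_ge0 //; lra.
  by rewrite mulfV ?pnatr_eq0 // => ?; lra.
case: (ltrgt0P a) => [a_pos|a_neg|a0]; last first.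
- rewrite a0 mulr0; case: (lerP w 0) => // w_pos.
  have delta0 : delta = 0 by rewrite -a_exp a0 expr0n.
  have r_in : 0 < w / (4 * N) <= 1.
    by rewrite divr_gt0 ?mulr_gt0 //= ?ler_pdivrMr ?mulr_gt0 //; lra.
  have := w_le _ r_in; rewrite delta0 mul0r add0r.
  have -> : 2 * (w / (4 * N)) * N = w / 2 by field; rewrite gt_eqF //; lra.
  lra.
- by move: a_ge0; rewrite leNgt a_neg.
have r_in : 0 < 2 * a <= 1 by apply/andP; split; lra.
have := w_le _ r_in.
have -> : delta * (2 / (2 * a)) ^+ n = a.
  rewrite -a_exp invfM mulrA divff ?pnatr_eq0 // mul1r exprS exprVn -mulrA.
  by rewrite mulfV ?mulr1 // expf_neq0 ?gt_eqF.
lra.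
Qed.

Theorem proposition10 (R : realType) :
  exists C : R, 0 < C /\
  forall (l : nat) (x p q : 'I_l -> R) (delta : R),
    (2 <= l)%N ->
    injective x ->
    (forall j, -1 <= x j <= 1) ->
    is_prob p -> is_prob q ->
    (forall j, 0 < p j \/ 0 < q j) ->
    (forall i : nat, (1 <= i <= l - 1)%N ->
       `|moment x p i - moment x q i| <= delta) ->
    W1 x p q <= C * l%:R * powR delta (l.-1%:R)^-1.
Proof.
exists 5; split=> // -[|[|n]] // x p q delta _ _ x_bound p_prob q_prob _ moments_le.
have delta_ge0 : 0 <= delta := le_trans (normr_ge0 _) (moments_le 1%N isT).
have [s xs_homo] := sorting_perm x.
have ps_prob := is_prob_perm s p_prob; have qs_prob := is_prob_perm s q_prob.
have xs_bound j : -1 <= (x \o s) j <= 1 := x_bound (s j).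
have xs_moments i : (1 <= i <= n.+1)%N ->
    `|moment (x \o s) (p \o s) i - moment (x \o s) (q \o s) i| <= delta.
  by rewrite !moment_perm; exact: moments_le.
have W1_le := W1_le_perm x (monotone_coupling_is_coupling ps_prob qs_prob).
apply: le_root_of_radius_bound => // [|r r_in]; apply: le_trans W1_le _.
  exact: monotone_coupling_cost_le2.
exact: monotone_coupling_cost_le.
Qed.
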